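(* Let $X$ be a topological space with a compatible metric $d$ and $T\colon X\to X$ continuous. Then $h(T)\le h^B_d(T)\le h^d(T)$.
   Context: For covers $\mathcal A,\mathcal B$ of $X$, $\mathcal A\vee\mathcal B=\{A\cap B:A\in\mathcal A,B\in\mathcal B,A\cap B\ne\emptyset\}$, $\mathcal A^n=\mathcal A\vee T^{-1}(\mathcal A)\vee\dots\vee T^{-(n-1)}(\mathcal A)$; $N(\mathcal A)$ is the least cardinality of a subcover and $N_K(\mathcal A)$ the least cardinality of a subfamily whose union contains $K$. An open cover is admissible if at least one of its elements has compact complement; $h(T)=\sup\{\lim_n\frac1n\log N(\mathcal A^n):\mathcal A\text{ admissible open cover}\}$. $d_n(x,y)=\max_{0\le j<n}d(T^jx,T^jy)$, $\mathcal B_{d_n}(\varepsilon)$ is the family of open $d_n$-balls of radius $\varepsilon$ centered at points of $X$; $h^d(T)=\sup_{\varepsilon>0}\lim_n\frac1n\log N(\mathcal B_{d_n}(\varepsilon))$ and $h^B_d(T)=\sup_{\varepsilon>0,K\text{ compact}}\limsup_n\frac1n\log N_K(\mathcal B_{d_n}(\varepsilon))$. *)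

From HB Require Import structures.
From mathcomp Require Import all_boot all_order all_algebra.
From mathcomp Require Import all_classical all_reals all_analysis.
Set Implicit Arguments. Unset Strict Implicit. Unset Printing Implicit Defensive.
Import Order.TTheory GRing.Theory Num.Theory.
Local Open Scope classical_set_scope.
Local Open Scope ring_scope.

Section Entropy.
Context {R : realType} {X : topologicalType}.

Definition is_metric (d : X -> X -> R) : Prop :=
  (forall x y, 0 <= d x y) /\ (forall x y, d x y = 0 <-> x = y) /\
  (forall x y, d x y = d y x) /\ (forall x y z, d x z <= d x y + d y z).

Definition metric_compatible (d : X -> X -> R) : Prop :=
  forall U : set X, open U <->
    (forall x, U x -> exists2 e : R, 0 < e & [set y | d x y < e] `<=` U).

Definition cover_join (A B : set (set X)) : set (set X) :=
  [set C | exists U V, [/\ A U, B V, C = U `&` V & C !=set0]].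

Definition cover_preimage (T : X -> X) (j : nat) (A : set (set X)) :
  set (set X) := [set iter j T @^-1` U | U in A].

Fixpoint cover_iter (T : X -> X) (A : set (set X)) (n : nat) : set (set X) :=
  match n with
  | 0 => [set setT]
  | n'.+1 => cover_join (cover_iter T A n') (cover_preimage T n' A)
  end.

(* N_K(A): least cardinality of a subfamily of A whose union contains K
   (+oo if no finite such subfamily exists) *)
Definition NK (K : set X) (A : set (set X)) : \bar R :=
  ereal_inf [set (n%:R)%:E | n in [set n : nat | exists f : 'I_n -> set X,
     (forall i, A (f i)) /\ K `<=` \bigcup_(i in setT) f i]].

Definition Ncov (A : set (set X)) : \bar R := NK setT A.

Definition elog (x : \bar R) : \bar R :=
  match x with
  | r%:E => if 0 < r then (ln r)%:E else (-oo)%E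
  | _ => x
  end.

Definition rate (u : nat -> \bar R) : \bar R :=
  limn_esup (fun n => ((n%:R)^-1)%:E * elog (u n))%E.

Definition open_cover (A : set (set X)) : Prop :=
  (forall U, A U -> open U) /\ setT `<=` \bigcup_(U in A) U.

Definition admissible (A : set (set X)) : Prop :=
  open_cover A /\ exists2 U, A U & compact (~` U).

Definition htop (T : X -> X) : \bar R :=
  ereal_sup [set rate (fun n => Ncov (cover_iter T A n)) | A in admissible].

Definition dn (d : X -> X -> R) (T : X -> X) (n : nat) (x y : X) : R :=
  \big[Num.max/0]_(j < n) d (iter j T x) (iter j T y).

Definition balls_dn (d : X -> X -> R) (T : X -> X) (n : nat) (eps : R) :
  set (set X) := [set [set y | dn d T n x y < eps] | x in setT].

Definition hd (d : X -> X -> R) (T : X -> X) : \bar R :=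
  ereal_sup [set rate (fun n => Ncov (balls_dn d T n eps)) | eps in [set e : R | 0 < e]].

Definition hBd (d : X -> X -> R) (T : X -> X) : \bar R :=
  ereal_sup [set v | exists eps : R, exists K : set X,
     [/\ 0 < eps, compact K & v = rate (fun n => NK K (balls_dn d T n eps))]].

End Entropy.

From HB Require Import structures.
From mathcomp Require Import all_boot all_order all_algebra.
From mathcomp Require Import all_classical all_reals all_analysis.
From mathcomp Require Import lra.
Import Order.TTheory GRing.Theory Num.Theory.
Local Open Scope classical_set_scope.
Local Open Scope ereal_scope.

(* Let A be an admissible cover with a member U0 whose complement is compact.
   A Lebesgue number argument on the compact set ~` U0 yields eps > 0 such that
   every eps-ball of d lies in a member of A.  If m Bowen balls of radius eps
   cover ~` U0, then every orbit segment of length n either stays in U0 or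
   first leaves it at some time j0 < n into one of these balls, after which it
   eps-shadows the centre of that ball; this gives a subcover of A^n with at
   most n m + 1 members, and log (n m + 1) / n differs from log m / n by at
   most log (n + 1) / n -> 0.  The second inequality holds because N_K <= N. *)

Section SubcoverCounts.
Context {R : realType} {X : topologicalType}.
Implicit Types (K : set X) (A : set (set X)).

Definition subcover_of_size K A (m : nat) : Prop :=
  exists f : 'I_m -> set X, (forall i, A (f i)) /\ K `<=` \bigcup_(i in setT) f i.

Lemma NK_le_size K A m : subcover_of_size K A m -> NK K A <= (m%:R%:E : \bar R).
Proof. by move=> KA; apply: ereal_inf_lbound; exists m. Qed.

Lemma NK_attained K A :
  NK K A = +oo :> \bar R \/ exists m, subcover_of_size K A m /\ NK K A = m%:R%:E :> \bar R.
Proof.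
have [[m0 Km0]|noKm] := pselect (exists m, subcover_of_size K A m); last first.
  left; apply/eqP; rewrite eq_le leey /=.
  by apply: le_ereal_inf_tmp => y [m Km _]; exfalso; apply: noKm; exists m.
have exKm : exists m, `[< subcover_of_size K A m >] by exists m0; apply/asboolP.
case: (ex_minnP exKm) => m /asboolP Km m_min; right; exists m; split => //.
apply/le_anti/andP; split; first exact: NK_le_size.
apply: le_ereal_inf_tmp => _ [k Kk <-]; rewrite lee_fin ler_nat.
by apply: m_min; apply/asboolP.
Qed.

Lemma NK_set0 A : NK set0 A = 0 :> \bar R.
Proof.
have cover0 : subcover_of_size set0 A 0 by exists (fun=> set0); split=> [[]|] //.
apply/le_anti/andP; split; first exact: NK_le_size cover0.
by apply: le_ereal_inf_tmp => _ [m _ <-]; rewrite lee_fin.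
Qed.

Lemma le_NK K K' A : K `<=` K' -> NK K A <= (NK K' A : \bar R).
Proof.
move=> KK'; apply: le_ereal_inf_tmp => _ [m [f [Af K'f]] <-].
by apply: ereal_inf_lbound; exists m => //; exists f; split => // x /KK' /K'f.
Qed.

Lemma subcover_of_size_gt0 {K A m x} : K x -> subcover_of_size K A m -> (0 < m)%N.
Proof. by move=> Kx [f [_ /(_ x Kx) [[i im] _ _]]]; exact: leq_ltn_trans (leq0n i) im. Qed.

End SubcoverCounts.

Section Itineraries.
Context {R : realType} {X : topologicalType}.
Variable T : X -> X.

Lemma cover_iter_itinerary (A : set (set X)) (c : nat -> set X) n :
  (forall j, A (c j)) -> (exists y, forall j, (j < n)%N -> c j (iter j T y)) ->
  cover_iter T A n [set y | forall j, (j < n)%N -> c j (iter j T y)].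
Proof.
move=> Ac; elim: n => [_|n IH [y cy]] /=.
  by apply/seteqP; split => // z _ j; rewrite ltn0.
exists [set y | forall j, (j < n)%N -> c j (iter j T y)], (iter n T @^-1` c n).
split.
- by apply: IH; exists y => j jn; apply/cy/leqW.
- by exists (c n).
- apply/seteqP; split => z /=; first by move=> cz; split=> [j /leqW|]; apply: cz.
  by move=> [cz czn] j; rewrite ltnS leq_eqVlt => /orP[/eqP->|/cz].
- by exists y.
Qed.

(* [x0] only serves to fill the slots of unrealised itineraries. *)
Lemma Ncov_cover_iter_le_card (A : set (set X)) n (I : finType)
    (c : I -> nat -> set X) (x0 : X) :
  (forall i j, A (c i j)) ->
  (forall y, exists i, forall j, (j < n)%N -> c i j (iter j T y)) ->
  Ncov (cover_iter T A n) <= (#|I|%:R%:E : \bar R).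
Proof.
move=> Ac follows.
pose S i := [set y | forall j, (j < n)%N -> c i j (iter j T y)].
have [i0 S_i0] := follows x0.
pose f (k : 'I_#|I|) := if `[< S (enum_val k) !=set0 >] then S (enum_val k) else S i0.
apply: NK_le_size; exists f; split.
  move=> k; rewrite /f; case: asboolP => [Sk|_]; apply: cover_iter_itinerary => //.
  by exists x0.
move=> y _; have [i Siy] := follows y.
exists (enum_rank i) => //; rewrite /f enum_rankK.
by case: asboolP => // -[]; exists y.
Qed.

Variable d : X -> X -> R.

Lemma dn_ge n l x y : (l < n)%N -> (d (iter l T x) (iter l T y) <= dn d T n x y)%R.
Proof.
move=> ln; exact: (le_bigmax 0%R (fun j : 'I_n => d (iter j T x) (iter j T y)) (Ordinal ln)).
Qed.

Lemma Ncov_cover_iter_le_dn_subcover (A : set (set X)) (U0 K : set X) (eps : R)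
    (x0 : X) n m :
  A U0 -> ~` U0 `<=` K ->
  (forall c, exists U, A U /\ [set z | d c z < eps]%R `<=` U) ->
  subcover_of_size K (balls_dn d T n eps) m ->
  Ncov (cover_iter T A n) <= (((n * m).+1)%:R%:E : \bar R).
Proof.
move=> AU0 U0K ball_in_A [f [f_ball Kf]].
have [g gP] := choice ball_in_A.
have /choice[xc xcE] : forall i, exists x, f i = [set y | dn d T n x y < eps]%R.
  by move=> i; have [x _ <-] := f_ball i; exists x.
(* [Some (j0, i)]: the orbit first leaves U0 at time j0, into the Bowen ball
   around [xc i], and then eps-shadows the orbit of [xc i];
   [None]: the orbit stays in U0 up to time n. *)
pose c (o : option ('I_n * 'I_m)) (j : nat) : set X :=
  if o is Some (j0, i) then
    if (j < j0)%N then U0 else g (iter (j - j0) T (xc i))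
  else U0.
have -> : (n * m).+1 = #|{: option ('I_n * 'I_m)}|.
  by rewrite card_option card_prod !card_ord.
apply: (@Ncov_cover_iter_le_card A n _ c x0).
  by move=> [[j0 i]|] j //=; case: ifP => _ //; exact: (gP _).1.
move=> y.
have [[j1 [j1n yj1]]|stays] := pselect (exists j, (j < n)%N /\ ~ U0 (iter j T y)).
  have exit : exists j, (j < n)%N && `[< ~ U0 (iter j T y) >].
    by exists j1; rewrite j1n; apply/asboolP.
  case: (ex_minnP exit) => j0 /andP[j0n /asboolP yj0] j0_min.
  have [i _] := Kf _ (U0K _ yj0); rewrite xcE /= => near_i.
  exists (Some (Ordinal j0n, i)) => j jn /=; case: ifPn => [jj0|].
    apply: contrapT => yj; have := j0_min j.
    by rewrite jn asboolT //= leqNgt jj0 => /(_ isT).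
  rewrite -leqNgt => j0j; apply: (gP _).2 => /=.
  have -> : iter j T y = iter (j - j0) T (iter j0 T y) by rewrite -iterD subnK.
  apply: le_lt_trans near_i; apply: dn_ge.
  by rewrite (leq_ltn_trans (leq_subr j0 j)).
by exists None => j jn /=; apply: contrapT => yj; apply: stays; exists j.
Qed.

End Itineraries.

Section MetricCovers.
Context {R : realType} {X : topologicalType} {d : X -> X -> R}.
Hypotheses (d_metric : is_metric d) (d_compat : metric_compatible d).
Local Open Scope ring_scope.

Lemma open_dball x (e : R) : open [set y | d x y < e].
Proof.
have [_ [_ [_ d_tri]]] := d_metric.
apply/d_compat => y /= dxy; exists (e - d x y); first by rewrite subr_gt0.
by move=> z /= dyz; apply: le_lt_trans (d_tri x y z) _; rewrite -ltrBrDl.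
Qed.

Lemma lebesgue_number (K : set X) (A : set (set X)) :
  compact K -> (forall U, A U -> open U) -> K `<=` \bigcup_(U in A) U ->
  exists2 del : R, 0 < del &
    forall k, K k -> exists2 U, A U & [set z | d k z < del] `<=` U.
Proof.
have [_ [d_eq0 [_ d_tri]]] := d_metric.
move=> /compact_near_coveringP cK Aopen KA.
have [|N _ HN] := cK nat \oo
  (fun i y => exists2 U, A U & [set z | d y z < i.+1%:R^-1] `<=` U).
  move=> x Kx; have [U AU Ux] := KA x Kx.
  have [e e0 xeU] := proj1 (d_compat U) (Aopen U AU) x Ux.
  have e20 : 0 < e / 2 by rewrite divr_gt0.
  have [N _ N_lt] := near_infty_natSinv_lt (PosNum e20).
  exists ([set y | d x y < e / 2], [set i | (N <= i)%N]).
    split => /=; last by exists N.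
    by apply: open_nbhs_nbhs; split; [exact: open_dball | rewrite /= (proj2 (d_eq0 x x))].
  move=> [y i] /= [dxy Ni]; exists U => // z dyz; apply: xeU => /=.
  apply: le_lt_trans (d_tri x y z) _; rewrite [e]splitr ltrD //.
  by apply: lt_trans dyz _; exact: N_lt.
by exists N.+1%:R^-1 => [|k Kk]; [rewrite invr_gt0 ltr0Sn | exact: (HN N (leqnn N))].
Qed.

(* Balls far from the compact set ~` U0 lie in U0; the others lie within a
   Lebesgue ball of some point of ~` U0. *)
Lemma dball_refinement (A : set (set X)) (U0 : set X) :
  (forall U, A U -> open U) -> A U0 -> compact (~` U0) ->
  ~` U0 `<=` \bigcup_(U in A) U ->
  exists2 eps : R, 0 < eps &
    forall c, exists U, A U /\ [set z | d c z < eps] `<=` U.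
Proof.
have [_ [_ [d_sym d_tri]]] := d_metric.
move=> Aopen AU0 cU0 U0A; have [del del0 leb] := @lebesgue_number _ A cU0 Aopen U0A.
exists (del / 2); first by rewrite divr_gt0.
move=> c; have [[k [U0k dck]]|far] := pselect (exists k, ~ U0 k /\ d c k < del / 2).
  have [U AU kU] := leb k U0k; exists U; split => // z dcz; apply: kU => /=.
  by apply: le_lt_trans (d_tri k c z) _; rewrite d_sym [del]splitr ltrD.
by exists U0; split => // z dcz; apply: contrapT => U0z; apply: far; exists z.
Qed.

End MetricCovers.

Section Rates.
Variable R : realType.

Lemma le_elog (x y : \bar R) : x <= y -> elog x <= elog y.
Proof.
case: x => [x| |]; case: y => [y| |] //=; rewrite ?leey ?leNye // lee_fin => xy.
case: ifP => x0; last exact: leNye.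
by rewrite (lt_le_trans x0 xy) lee_fin ler_ln ?posrE // (lt_le_trans x0 xy).
Qed.

Lemma limn_esup_le_eps (u v : nat -> \bar R) :
  (forall e : R, (0 < e)%R -> \forall n \near \oo, u n <= v n + e%:E) ->
  limn_esup u <= limn_esup v.
Proof.
move=> uv; apply/lee_addgt0Pr => e e0; rewrite !limn_esup_lim.
have [N _ uvN] := uv e e0.
have esups_e : (fun n => esups v n + e%:E) @ \oo --> limn (esups v) + e%:E.
  by apply: cvgeD; [exact: fin_num_adde_defl | exact: is_cvg_esups | exact: cvg_cst].
rewrite -(cvg_lim _ esups_e) //.
apply: lee_lim; [exact: is_cvg_esups | by apply/cvg_ex; eexists; exact: esups_e |].
near=> n; apply: ge_ereal_sup => _ [k /= nk <-].
apply: le_trans (uvN k _) _; first by apply: leq_trans nk; near: n; exists N.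
by rewrite leeD2r //; apply: ereal_sup_ubound; exists k.
Unshelve. all: by end_near. Qed.

Lemma le_rate (u v : nat -> \bar R) : (forall n, u n <= v n) -> rate u <= rate v.
Proof.
move=> uv; apply: limn_esup_le_eps => e e0; apply: nearW => n.
apply: le_trans (leeDl _ _); last by rewrite lee_fin ltW.
by apply: lee_wpmul2l; [rewrite lee_fin invr_ge0 ler0n | exact: le_elog].
Qed.

Local Open Scope ring_scope.

(* From ln s < s at s = sqrt (n + 1): ln (n + 1) < 2 sqrt (n + 1). *)
Lemma ln_succ_div_le (e : R) : 0 < e ->
  \forall n \near \oo, n%:R^-1 * ln (n.+1%:R : R) <= e.
Proof.
move=> e0; near=> n.
have n_ge1 : (1 <= n)%N by near: n; exists 1%N.
have n_large : 8 / e ^+ 2 <= n%:R by near: n; exact: nbhs_infty_ger.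
set s := Num.sqrt (n.+1%:R : R).
have s0 : 0 < s by rewrite sqrtr_gt0 ltr0n.
have s2 : s ^+ 2 = n%:R + 1 by rewrite sqr_sqrtr ?ler0n // -natr1.
have lnE : ln (n.+1%:R : R) = ln s *+ 2 by rewrite -lnXn // s2 natr1.
have lns : ln s < s := ln_sublinear s0.
have n0 : (0 : R) < n%:R by rewrite ltr0n.
have n1 : (1 : R) <= n%:R by rewrite ler1n.
have en8 : 8 <= e ^+ 2 * n%:R.
  by move: n_large; rewrite mulrC ler_pdivrMl ?exprn_gt0.
rewrite ler_pdivrMl // lnE mulr2n.
set N := (n%:R : R) in n0 n1 en8 s2 *.
have h1 : 8 * N <= (e * N) ^+ 2.
  by rewrite exprMn expr2 mulrA; apply: ler_wpM2r; [lra | rewrite -expr2].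
have h2 : 4 * s ^+ 2 <= (e * N) ^+ 2 by rewrite s2; lra.
have h3 : 0 <= e * N by rewrite mulr_ge0 // ltW.
have h4 : s + s <= e * N by nra.
lra.
Unshelve. all: by end_near. Qed.

Lemma ln_mulSn_le (n m : nat) : (0 < m)%N ->
  ln ((n * m).+1%:R : R) <= ln n.+1%:R + ln m%:R.
Proof.
move=> m0; rewrite -lnM ?posrE ?ltr0n // ler_ln ?posrE ?mulr_gt0 ?ltr0n //.
by rewrite -natrM ler_nat mulSn addnC -addn1 leq_add2l.
Qed.

Local Open Scope ereal_scope.

Lemma rate_le_rate_NK {X : topologicalType} (b : nat -> \bar R) (K : set X)
    (C : nat -> set (set X)) :
  K !=set0 ->
  (forall n m, (0 < n)%N -> subcover_of_size K (C n) m ->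
     b n <= ((n * m).+1)%:R%:E) ->
  rate b <= rate (fun n => NK K (C n)).
Proof.
move=> [x Kx] b_le; apply: limn_esup_le_eps => e e0.
have := ln_succ_div_le e e0; apply: filter_app; near=> n => lnn_small.
have n0 : (0 < n)%N by near: n; exists 1%N.
have ninv0 : (0 < n%:R^-1 :> R)%R by rewrite invr_gt0 ltr0n.
have [->|[m [Km ->]]] := @NK_attained R _ K (C n).
  by rewrite /= mulry gtr0_sg // mul1e addye // leey.
have m0 := subcover_of_size_gt0 Kx Km.
have := le_elog _ _ (b_le n m n0 Km); rewrite /= !ltr0n m0 /=.
case: (elog (b n)) => [r| |] //; last by move=> _; rewrite mulrNy gtr0_sg // mul1e leNye.
rewrite /= !lee_fin => r_le; rewrite addrC.
apply: (le_trans (ler_wpM2l (ltW ninv0) (le_trans r_le (ln_mulSn_le n m m0)))).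
by rewrite mulrDr lerD2r.
Unshelve. all: by end_near. Qed.

End Rates.

Section EntropyComparison.
Variables (R : realType) (X : topologicalType) (d : X -> X -> R) (T : X -> X).
Hypotheses (d_metric : is_metric d) (d_compat : metric_compatible d).

Lemma htop_le_hBd : htop T <= hBd d T.
Proof.
apply: ge_ereal_sup => _ [A [[Aopen Acover] [U0 AU0 cU0]] <-].
have [[x0 _]|X0] := pselect (exists x : X, True); last first.
  have setT0 : [set: X] = set0 by apply/seteqP; split => // x; exfalso; apply: X0; exists x.
  have -> : (fun n => Ncov (cover_iter T A n) : \bar R) = fun n => NK set0 (balls_dn d T n 1%R).
    by apply: funext => n; rewrite /Ncov setT0 !NK_set0.
  by apply: ereal_sup_ubound; exists 1%R, set0; split => //; exact: compact0.
have [eps eps0 ball_in_A] :=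
  dball_refinement d_metric d_compat _ _ Aopen AU0 cU0 (fun x _ => Acover x I).
(* The extra point keeps the counts N_K positive, so their logarithms are finite. *)
pose K := ~` U0 `|` [set x0].
have cK : compact K by apply: compactU => //; exact: compact_set1.
have hK : rate (fun n => NK K (balls_dn d T n eps)) <= hBd d T.
  by apply: ereal_sup_ubound; exists eps, K.
apply: le_trans hK; apply: rate_le_rate_NK; first by exists x0; right.
move=> n m _; apply: Ncov_cover_iter_le_dn_subcover AU0 _ ball_in_A => //.
by move=> x; left.
Qed.

Lemma hBd_le_hd : hBd d T <= hd d T.
Proof.
apply: ge_ereal_sup => _ [eps [K [eps0 _ ->]]].
have hd_eps : rate (fun n => Ncov (balls_dn d T n eps)) <= hd d T.
  by apply: ereal_sup_ubound; exists eps.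
by apply: le_trans hd_eps; apply: le_rate => n; apply: le_NK.
Qed.

End EntropyComparison.

Theorem proposition2p30 (R : realType) (X : topologicalType)
  (d : X -> X -> R) (T : X -> X) :
  is_metric d -> metric_compatible d -> continuous T ->
  htop T <= hBd d T /\ hBd d T <= hd d T.
Proof.
move=> d_metric d_compat _ .
by split; [exact: htop_le_hBd | exact: hBd_le_hd].
Qed.
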